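(* Let $M,N$ be networks of pTCWS, $q\in[0,1]$ and $\Delta\in\mathcal D(\mathcal N)$. If $M\overset{\hat\tau}{\Longrightarrow}(1-q)\overline N+q\Delta$, then $N\sqsubseteq_q M$.
   Context: The process calculus pTCWS. Processes $P,Q$ and probabilistic choices $C,D$ are $P ::= \mathsf{nil} \mid {!}\langle u\rangle.C \mid \lfloor ?(x).C\rfloor D \mid \tau.C \mid \sigma.C \mid X \mid \mathsf{fix}\,X.P$ and $C ::= \bigoplus_{i\in I} p_i{:}P_i$ ($I$ finite non-empty, $p_i\in(0,1]$, $\sum_i p_i=1$); in $\mathsf{fix}\,X.P$ every occurrence of $X$ is time-guarded. $1{:}P$ is written $P$; ${!}\langle v\rangle$ is ${!}\langle v\rangle.\mathsf{nil}$. Networks: $M::=\mathbf 0\mid M_1\mid M_2\mid n[P]^\nu\mid\bot$, where $n[P]^\nu$ is a node named $n$ running closed process $P$ with neighbour set $\nu$, and $\bot$ is a stuck network; $\mathrm{nds}(M)$ is the set of node names. Structural congruence $\equiv$: least equivalence preserved by $\mid$, making $\mid$ a commutative monoid with unit $\mathbf 0$, with $n[\mathsf{fix}\,X.P]^\nu\equiv n[P\{\mathsf{fix}\,X.P/X\}]^\nu$. Networks are assumed well-formed. $\mathrm{rcv}(P)$ holds iff $n[P]^\nu\equiv n[\lfloor ?(x).C\rfloor D]^\nu$ for some $x,C,D$. Semantics: $\mathcal D(\mathcal N)$ finite-support probability distributions on networks, $|\Delta|$ total mass of a sub-distribution, $\overline M$ Dirac; $[\![n[\bigoplus_i p_i{:}P_i]^\nu]\!]=\sum_ip_i\overline{n[P_i]^\nu}$;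 $(\Delta\mid\Theta)(M_1\mid M_2)=\Delta(M_1)\Theta(M_2)$. Transitions $M\xrightarrow{\lambda}\Delta$, $\lambda\in\{m!v\triangleright\nu, m?v,\tau,\sigma\}$, form the least relation closed under: (Snd) $m[{!}\langle v\rangle.C]^\nu\xrightarrow{m!v\triangleright\nu}[\![m[C]^\nu]\!]$; (Rcv) if $m\in\nu$: $n[\lfloor ?(x).C\rfloor D]^\nu\xrightarrow{m?v}[\![n[C\{v/x\}]^\nu]\!]$; $\mathbf 0\xrightarrow{m?v}\overline{\mathbf 0}$; (RcvEnb) if $\neg(m\in\nu\wedge\mathrm{rcv}(P))$ and $m\ne n$: $n[P]^\nu\xrightarrow{m?v}\overline{n[P]^\nu}$; (RcvPar) $M\xrightarrow{m?v}\Delta$, $N\xrightarrow{m?v}\Theta$ give $M\mid N\xrightarrow{m?v}\Delta\mid\Theta$; (Bcast) $M\xrightarrow{m!v\triangleright\nu}\Delta$, $N\xrightarrow{m?v}\Theta$ give $M\mid N\xrightarrow{m!v\triangleright(\nu\setminus\mathrm{nds}(N))}\Delta\mid\Theta$ (and symmetrically); (Tau) $m[\tau.C]^\nu\xrightarrow{\tau}[\![m[C]^\nu]\!]$; (TauPar) $M\xrightarrow{\tau}\Delta$ and $N$ not of the form $\bot\mid N'$ give $M\mid N\xrightarrow{\tau}\Delta\mid\overline N$ (and symmetrically); $\mathbf 0\xrightarrow{\sigma}\overline{\mathbf 0}$; $n[\mathsf{nil}]^\nu\xrightarrow{\sigma}\overline{n[\mathsf{nil}]^\nu}$; (Timeout)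 $n[\lfloor ?(x).C\rfloor D]^\nu\xrightarrow{\sigma}[\![n[D]^\nu]\!]$; (Sleep) $n[\sigma.C]^\nu\xrightarrow{\sigma}[\![n[C]^\nu]\!]$; ($\sigma$-Par) $M\xrightarrow{\sigma}\Delta$, $N\xrightarrow{\sigma}\Theta$ give $M\mid N\xrightarrow{\sigma}\Delta\mid\Theta$; (Rec) $n[P\{\mathsf{fix}\,X.P/X\}]^\nu\xrightarrow{\lambda}\Delta$ gives $n[\mathsf{fix}\,X.P]^\nu\xrightarrow{\lambda}\Delta$; (ShhSnd) $M\xrightarrow{m!v\triangleright\emptyset}\Delta$ gives $M\xrightarrow{\tau}\Delta$; (ObsSnd) $M\xrightarrow{m!v\triangleright\nu}\Delta$ with $\nu\ne\emptyset$ gives $M\xrightarrow{!v\triangleright\nu}\Delta$. $\bot$ has no transitions. $\alpha$ ranges over $!v\triangleright\nu$, $m?v$, $\sigma$, $\tau$. Weak transitions: $M\xrightarrow{\hat\tau}\Delta$ iff $M\xrightarrow{\tau}\Delta$ or $\Delta=\overline M$; for $\alpha\ne\tau$, $\xrightarrow{\hat\alpha}=\xrightarrow{\alpha}$. For $\Delta=\sum_{i\in I}p_i\overline{M_i}$, $\Delta\xrightarrow{\hat\alpha}\Theta$ iff for some non-empty $J\subseteq I$, $M_j\xrightarrow{\hat\alpha}\Theta_j$ ($j\in J$), $M_i$ has no $\hat\alpha$-transition ($i\notin J$), and $\Theta=\sum_{j\in J}p_j\Theta_j$. $\overset{\hat\tau}{\Longrightarrow}$ is the reflexive-transitive closure of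 $\xrightarrow{\hat\tau}$; $\overset{\hat\alpha}{\Longrightarrow}=\overset{\hat\tau}{\Longrightarrow}\xrightarrow{\hat\alpha}\overset{\hat\tau}{\Longrightarrow}$ for $\alpha\neq\tau$. A pseudoquasimetric is $d:\mathcal N\times\mathcal N\to[0,1]$ with $d(M,M)=0$ and the triangle inequality. $\Omega(\Delta,\Theta)$ is the set of matchings (distributions on pairs with marginals $\Delta,\Theta$); $\mathcal K(d)(\Delta,\Theta)=\min_{\omega\in\Omega(\Delta,\Theta)}\sum\omega(M,N)d(M,N)$. A weak simulation quasimetric is a pseudoquasimetric $d$ such that whenever $d(M,N)<1$ and $M\xrightarrow{\alpha}\Delta$ there is $\Theta$ with $N\overset{\hat\alpha}{\Longrightarrow}\Theta$ and $\mathcal K(d)(\Delta,\Theta+(1-|\Theta|)\overline\bot)\le d(M,N)$. $\mathbf m$ denotes the least weak simulation quasimetric (it exists), and $M\sqsubseteq_pN$ iff $\mathbf m(M,N)\le p$. *)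

From Stdlib Require Import Reals List ClassicalEpsilon FunctionalExtensionality.
Import ListNotations.
Open Scope R_scope.

Inductive term : Type :=
| TVal (v : nat)
| TVar (x : nat).

Inductive proc : Type :=
| PNil
| PSnd (u : term) (C : pchoice)
| PRcv (x : nat) (C : pchoice) (D : pchoice)
| PTau (C : pchoice)
| PSleep (C : pchoice)
| PVar (X : nat)
| PFix (X : nat) (P : proc)
with pchoice : Type :=                   (* (+)_{i in I} p_i : P_i, I non-empty *)
| CLast (p : R) (P : proc)
| CCons (p : R) (P : proc) (C : pchoice).

(* neighbour sets are sets of node names *)
Definition nset := nat -> Prop.

Inductive network : Type :=
| NZero
| NPar (M1 M2 : network)
| NNode (n : nat) (P : proc) (nu : nset)
| NBot.

Fixpoint nds (M : network) : list nat :=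
  match M with
  | NZero => []
  | NPar M1 M2 => nds M1 ++ nds M2
  | NNode n _ _ => [n]
  | NBot => []
  end.

(** * Substitutions (only closed terms are ever substituted, so no capture) *)

Definition subst_term (v x : nat) (u : term) : term :=
  match u with
  | TVar y => if Nat.eqb y x then TVal v else TVar y
  | TVal w => TVal w
  end.

Fixpoint subst_v (v x : nat) (P : proc) : proc :=
  match P with
  | PNil => PNil
  | PSnd u C => PSnd (subst_term v x u) (subst_vc v x C)
  | PRcv y C D => PRcv y (if Nat.eqb y x then C else subst_vc v x C) (subst_vc v x D)
  | PTau C => PTau (subst_vc v x C)
  | PSleep C => PSleep (subst_vc v x C)
  | PVar X => PVar X
  | PFix X Q => PFix X (subst_v v x Q)
  end
with subst_vc (v x : nat) (C : pchoice) : pchoice :=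
  match C with
  | CLast p Q => CLast p (subst_v v x Q)
  | CCons p Q C' => CCons p (subst_v v x Q) (subst_vc v x C')
  end.

Fixpoint subst_X (Q : proc) (X : nat) (P : proc) : proc :=
  match P with
  | PNil => PNil
  | PSnd u C => PSnd u (subst_Xc Q X C)
  | PRcv y C D => PRcv y (subst_Xc Q X C) (subst_Xc Q X D)
  | PTau C => PTau (subst_Xc Q X C)
  | PSleep C => PSleep (subst_Xc Q X C)
  | PVar Y => if Nat.eqb Y X then Q else PVar Y
  | PFix Y P' => if Nat.eqb Y X then PFix Y P' else PFix Y (subst_X Q X P')
  end
with subst_Xc (Q : proc) (X : nat) (C : pchoice) : pchoice :=
  match C with
  | CLast p P' => CLast p (subst_X Q X P')
  | CCons p P' C' => CCons p (subst_X Q X P') (subst_Xc Q X C')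
  end.

(* X is time-guarded in P: every free occurrence of X lies under a sigma
   prefix or in the timeout branch D of a receiver |_?(x).C_|D. *)
Fixpoint tguarded (X : nat) (P : proc) : Prop :=
  match P with
  | PNil => True
  | PSnd _ C => tguarded_c X C
  | PRcv _ C _ => tguarded_c X C
  | PTau C => tguarded_c X C
  | PSleep _ => True
  | PVar Y => Y <> X
  | PFix Y P' => Y = X \/ tguarded X P'
  end
with tguarded_c (X : nat) (C : pchoice) : Prop :=
  match C with
  | CLast _ P' => tguarded X P'
  | CCons _ P' C' => tguarded X P' /\ tguarded_c X C'
  end.

Definition term_ok (xs : list nat) (u : term) : Prop :=
  match u with TVal _ => True | TVar x => In x xs end.

Fixpoint csum (C : pchoice) : R :=
  match C with
  | CLast p _ => p
  | CCons p _ C' => p + csum C'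
  end.

(* xs: bound data variables, Xs: bound process variables *)
Fixpoint proc_wf (xs Xs : list nat) (P : proc) : Prop :=
  match P with
  | PNil => True
  | PSnd u C => term_ok xs u /\ choice_wf xs Xs C /\ csum C = 1
  | PRcv x C D => choice_wf (x :: xs) Xs C /\ csum C = 1 /\ choice_wf xs Xs D /\ csum D = 1
  | PTau C => choice_wf xs Xs C /\ csum C = 1
  | PSleep C => choice_wf xs Xs C /\ csum C = 1
  | PVar X => In X Xs
  | PFix X P' => tguarded X P' /\ proc_wf xs (X :: Xs) P'
  end
with choice_wf (xs Xs : list nat) (C : pchoice) : Prop :=
  match C with
  | CLast p P' => 0 < p <= 1 /\ proc_wf xs Xs P'
  | CCons p P' C' => 0 < p <= 1 /\ proc_wf xs Xs P' /\ choice_wf xs Xs C'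
  end.

Fixpoint net_ok (M : network) : Prop :=
  match M with
  | NZero => True
  | NPar M1 M2 => net_ok M1 /\ net_ok M2
  | NNode _ P _ => proc_wf [] [] P
  | NBot => True
  end.

Inductive scong : network -> network -> Prop :=
| SC_refl M : scong M M
| SC_sym M N : scong M N -> scong N M
| SC_trans M N O : scong M N -> scong N O -> scong M O
| SC_par M M' N N' : scong M M' -> scong N N' -> scong (NPar M N) (NPar M' N')
| SC_comm M N : scong (NPar M N) (NPar N M)
| SC_assoc M N O : scong (NPar (NPar M N) O) (NPar M (NPar N O))
| SC_unit M : scong (NPar M NZero) M
| SC_fix n X P nu : scong (NNode n (PFix X P) nu) (NNode n (subst_X (PFix X P) X P) nu).

(* rcv(P), relative to the node n[P]^nu in which P runs *)
Definition rcv (n : nat) (nu : nset) (P : proc) : Prop :=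
  exists x C D, scong (NNode n P nu) (NNode n (PRcv x C D) nu).

Definition pdist := network -> R.

Definition sumR (l : list R) : R := fold_right Rplus 0 l.

Definition dirac (M : network) : pdist :=
  fun N => if excluded_middle_informative (N = M) then 1 else 0.

Definition has_mass (T : pdist) (r : R) : Prop :=
  exists l : list network, NoDup l /\ (forall X, T X <> 0 -> In X l) /\
    sumR (map T l) = r.

Definition is_dist (D : pdist) : Prop :=
  (forall X, 0 <= D X) /\ has_mass D 1.

Fixpoint sem (n : nat) (nu : nset) (C : pchoice) : pdist :=
  match C with
  | CLast p P => fun X => p * dirac (NNode n P nu) X
  | CCons p P C' => fun X => p * dirac (NNode n P nu) X + sem n nu C' X
  end.

Definition dpar (D T : pdist) : pdist :=
  fun X => match X with NPar M1 M2 => D M1 * T M2 | _ => 0 end.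

Inductive label : Type :=
| LSnd (m v : nat) (nu : nset)
| LOut (v : nat) (nu : nset)
| LIn (m v : nat)
| LTau
| LSigma.

Definition setminus (nu : nset) (l : list nat) : nset :=
  fun k => nu k /\ ~ In k l.

Inductive step : network -> label -> pdist -> Prop :=
| T_Snd m v C nu :
    step (NNode m (PSnd (TVal v) C) nu) (LSnd m v nu) (sem m nu C)
| T_Rcv m n x C D nu v :
    nu m -> step (NNode n (PRcv x C D) nu) (LIn m v) (sem n nu (subst_vc v x C))
| T_RcvZero m v : step NZero (LIn m v) (dirac NZero)
| T_RcvEnb m n P nu v :
    ~ (nu m /\ rcv n nu P) -> m <> n ->
    step (NNode n P nu) (LIn m v) (dirac (NNode n P nu))
| T_RcvPar M N m v D T :
    step M (LIn m v) D -> step N (LIn m v) T -> step (NPar M N) (LIn m v) (dpar D T)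
| T_BcastL M N m v nu D T :
    step M (LSnd m v nu) D -> step N (LIn m v) T ->
    step (NPar M N) (LSnd m v (setminus nu (nds N))) (dpar D T)
| T_BcastR M N m v nu D T :
    step M (LIn m v) D -> step N (LSnd m v nu) T ->
    step (NPar M N) (LSnd m v (setminus nu (nds M))) (dpar D T)
| T_Tau m C nu : step (NNode m (PTau C) nu) LTau (sem m nu C)
| T_TauParL M N D :
    step M LTau D -> (~ exists N', N = NPar NBot N') ->
    step (NPar M N) LTau (dpar D (dirac N))
| T_TauParR M N D :
    step N LTau D -> (~ exists M', M = NPar NBot M') ->
    step (NPar M N) LTau (dpar (dirac M) D)
| T_SigZero : step NZero LSigma (dirac NZero)
| T_SigNil n nu : step (NNode n PNil nu) LSigma (dirac (NNode n PNil nu))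
| T_Timeout n x C D nu : step (NNode n (PRcv x C D) nu) LSigma (sem n nu D)
| T_Sleep n C nu : step (NNode n (PSleep C) nu) LSigma (sem n nu C)
| T_SigPar M N D T :
    step M LSigma D -> step N LSigma T -> step (NPar M N) LSigma (dpar D T)
| T_Rec n X P nu l D :
    step (NNode n (subst_X (PFix X P) X P) nu) l D -> step (NNode n (PFix X P) nu) l D
| T_ShhSnd M m v nu D :
    step M (LSnd m v nu) D -> (forall k, ~ nu k) -> step M LTau D
| T_ObsSnd M m v nu D :
    step M (LSnd m v nu) D -> (exists k, nu k) -> step M (LOut v nu) D.

Definition is_action (a : label) : Prop :=
  match a with LSnd _ _ _ => False | _ => True end.

Definition hstep (a : label) (M : network) (D : pdist) : Prop :=
  match a with
  | LTau => step M LTau D \/ D = dirac M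
  | _ => step M a D
  end.

(* lifting to distributions: Delta = sum_{i in I} p_i M_i, J the non-empty
   set of indices that move (lJ), the others (lN) have no hat-alpha move *)
Definition lift (a : label) (D T : pdist) : Prop :=
  exists (lJ : list (R * network * pdist)) (lN : list (R * network)),
    lJ <> [] /\
    Forall (fun '(p, M, T') => 0 < p <= 1 /\ hstep a M T') lJ /\
    Forall (fun '(p, M) => 0 < p <= 1 /\ forall T', ~ hstep a M T') lN /\
    (forall X, D X = sumR (map (fun '(p, M, _) => p * dirac M X) lJ)
                     + sumR (map (fun '(p, M) => p * dirac M X) lN)) /\
    (forall X, T X = sumR (map (fun '(p, _, T') => p * T' X) lJ)).

Inductive wtau : pdist -> pdist -> Prop :=
| WT_refl D : wtau D D
| WT_step D D' D'' : lift LTau D D' -> wtau D' D'' -> wtau D D''.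

Definition wstep (a : label) (M : network) (T : pdist) : Prop :=
  match a with
  | LTau => wtau (dirac M) T
  | _ => exists D1 D2, wtau (dirac M) D1 /\ lift a D1 D2 /\ wtau D2 T
  end.

(* a matching, as a finite list of weighted pairs (omega(M,N) = sum of weights) *)
Definition matching (w : list (R * network * network)) (D T : pdist) : Prop :=
  Forall (fun '(r, _, _) => 0 <= r) w /\
  (forall X, D X = sumR (map (fun '(r, M, _) => r * dirac M X) w)) /\
  (forall Y, T Y = sumR (map (fun '(r, _, N) => r * dirac N Y) w)).

Definition mcost (d : network -> network -> R) (w : list (R * network * network)) : R :=
  sumR (map (fun '(r, M, N) => r * d M N) w).

Definition is_kant (d : network -> network -> R) (D T : pdist) (k : R) : Prop :=
  (exists w, matching w D T /\ mcost d w = k) /\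
  (forall w, matching w D T -> k <= mcost d w).

Definition kant_le (d : network -> network -> R) (D T : pdist) (r : R) : Prop :=
  exists k, is_kant d D T k /\ k <= r.

Definition pseudoquasimetric (d : network -> network -> R) : Prop :=
  (forall M N, net_ok M -> net_ok N -> 0 <= d M N <= 1) /\
  (forall M, net_ok M -> d M M = 0) /\
  (forall M N O, net_ok M -> net_ok N -> net_ok O -> d M O <= d M N + d N O).

Definition weak_sim_qm (d : network -> network -> R) : Prop :=
  pseudoquasimetric d /\
  forall M N, net_ok M -> net_ok N -> d M N < 1 ->
    forall a D, is_action a -> step M a D ->
      exists T m, wstep a N T /\ has_mass T m /\
        kant_le d D (fun X => T X + (1 - m) * dirac NBot X) (d M N).

Definition least_wsqm (mm : network -> network -> R) : Prop :=
  weak_sim_qm mm /\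
  forall d, weak_sim_qm d -> forall M N, net_ok M -> net_ok N -> mm M N <= d M N.

(* M is simulated by N up to p *)
Definition qsim (mm : network -> network -> R) (p : R) (M N : network) : Prop :=
  mm M N <= p.

(* The least weak simulation quasimetric is below any explicit one, so it
   suffices to exhibit a weak simulation quasimetric [d] with [d N M = q]:
   take [d] to be 0 on the diagonal, [q] on the pair (N, M) and 1 elsewhere.
   A network simulates itself at distance 0. When [N] performs a step to
   [Theta], [M] answers by going to (1 - q) N + q Delta and letting the
   [N]-component perform the same step while each component of [Delta] moves
   if it can; the answer contains (1 - q) Theta, so leaving that part in place
   and transporting the remaining mass [q] arbitrarily costs at most [q].
   Kantorovich distances are minima, not infima: the matchings of two finitely
   supported distributions form a compact polytope. *)

From Stdlib Require Import Reals List Lra Lia ClassicalEpsilon.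
From mathcomp Require all_boot all_order all_algebra all_classical all_reals all_analysis.
From mathcomp Require Rstruct Rstruct_topology.
Import ListNotations.
Open Scope R_scope.

Definition lin (K : nat) (c v : nat -> R) : R :=
  sumR (map (fun k => v k * c k) (seq 0 K)).

Definition in_polytope (K : nat) (ub : nat -> R) (I : Type) (g : I -> nat -> R)
  (e : I -> R) (v : nat -> R) : Prop :=
  (forall k, (k < K)%nat -> 0 <= v k <= ub k) /\ (forall i, lin K (g i) v = e i).

Module LinearProgram.
Import all_boot all_order all_algebra all_classical all_reals all_analysis Rstruct Rstruct_topology.
Import Order.TTheory GRing.Theory Num.Theory numFieldTopology.Exports.
Local Open Scope classical_set_scope.
Local Open Scope ring_scope.

Definition coord_nat {K} (rv : 'rV[R]_K) (k : nat) : R :=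
  oapp (fun i : 'I_K => rv ord0 i) 0 (insub k).

Lemma coord_nat_row K (v : nat -> R) k : (k < K)%coq_nat -> coord_nat (\row_(i < K) v i) k = v k.
Proof. by move=> /ssrnat.ltP kK; rewrite /coord_nat insubT /= mxE. Qed.

Lemma coord_nat_continuous K k : continuous (fun rv : 'rV[R]_K => coord_nat rv k).
Proof.
rewrite /coord_nat; case: (insub k) => [i|] /=; first exact: coord_continuous.
exact: cst_continuous.
Qed.

Lemma lin_coord_continuous K (h : nat -> R) (s : list nat) :
  continuous (fun rv : 'rV[R]_K => sumR (List.map (fun k => Rmult (coord_nat rv k) (h k)) s)).
Proof.
elim: s => [|k s IH] /= x; first exact: cst_continuous.
apply: (@continuousD R R^o); last exact: IH.
exact: continuousM (coord_nat_continuous K k x) (@cst_continuous _ _ (h k) x).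
Qed.

Lemma lin_ext K c v v' : (forall k, (k < K)%coq_nat -> v k = v' k) -> lin K c v = lin K c v'.
Proof.
move=> vv'; rewrite /lin; congr sumR; apply: map_ext_in => k /in_seq [_ kK].
by rewrite vv'.
Qed.

Lemma in_polytope_ext K ub I g e v v' : (forall k, (k < K)%coq_nat -> v k = v' k) ->
  in_polytope K ub I g e v -> in_polytope K ub I g e v'.
Proof.
move=> vv' [box eqs]; split=> [k kK|i]; first by rewrite -vv' //; apply: box.
by rewrite -(lin_ext _ _ _ _ vv').
Qed.

Lemma lin_attains_min K ub I g e c :
  (exists v, in_polytope K ub I g e v) ->
  exists v, in_polytope K ub I g e v /\
    forall v', in_polytope K ub I g e v' -> Rle (lin K c v) (lin K c v').
Proof.
move=> [v0 Hv0].
pose F := [set rv : 'rV[R]_K | in_polytope K ub I g e (coord_nat rv)].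
have row_in_F v : in_polytope K ub I g e v -> F (\row_(i < K) v i).
  by apply: in_polytope_ext => k kK; rewrite coord_nat_row.
have F_closed : closed F.
  have -> : F = (\bigcap_(k in [set k | (k < K)%coq_nat]) [set rv | 0 <= coord_nat rv k]) `&`
              (\bigcap_(k in [set k | (k < K)%coq_nat]) [set rv | coord_nat rv k <= ub k]) `&`
              (\bigcap_(i in [set: I]) [set rv | lin K (g i) (coord_nat rv) = e i]).
    apply/seteqP; split=> rv /=.
      move=> [box eqs]; split; [split|] => [k /= kK|k /= kK|i _].
      - by apply/RleP; case: (box k kK).
      - by apply/RleP; case: (box k kK).
      - exact: eqs.
    move=> [[lo hi] eqs]; split=> [k kK|i]; last exact: eqs.
    by split; apply/RleP; [apply: lo|apply: hi].
  apply: closedI; first apply: closedI; apply: closed_bigI => k _.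
  - exact: (proj1 (continuous_closedP _) (coord_nat_continuous K k) _ (@closed_ge _ 0)).
  - exact: (proj1 (continuous_closedP _) (coord_nat_continuous K k) _ (@closed_le _ (ub k))).
  - exact: (proj1 (continuous_closedP _) (lin_coord_continuous K (g k) (List.seq 0 K)) _
                  (@closed_eq _ (e k))).
have F_compact : compact F.
  apply: (subclosed_compact F_closed
    (@rV_compact _ K (fun i => `[0, ub i]%classic) (fun i => @segment_compact _ _ _))).
  move=> rv [box _] i /=.
  have := box i (ssrnat.ltP (ltn_ord i)); rewrite /coord_nat valK /= => -[lo hi].
  by rewrite in_itv /=; apply/andP; split; apply/RleP.
have cost_continuous : {within F, continuous (fun rv => lin K c (coord_nat rv))}.
  by apply: continuous_subspaceT => x; apply: lin_coord_continuous.
have [cm cmF cmin] := EVT_min_rV (ex_intro _ _ (row_in_F _ Hv0)) F_compact cost_continuous.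
exists (coord_nat cm); split; first by rewrite inE in cmF.
move=> v' Hv'; rewrite (lin_ext _ c v' (coord_nat (\row_(i < K) v' i))); last first.
  by move=> k kK; rewrite coord_nat_row.
by apply/RleP; apply: cmin; rewrite inE; apply: row_in_F.
Qed.

End LinearProgram.

Lemma sumR_app l1 l2 : sumR (l1 ++ l2) = sumR l1 + sumR l2.
Proof. induction l1; simpl; [lra|rewrite IHl1; lra]. Qed.

Lemma sumR_add {A} (f g : A -> R) l :
  sumR (map (fun x => f x + g x) l) = sumR (map f l) + sumR (map g l).
Proof. induction l; simpl; [lra|rewrite IHl; lra]. Qed.

Lemma sumR_scal {A} (c : R) (f : A -> R) l :
  sumR (map (fun x => c * f x) l) = c * sumR (map f l).
Proof. induction l; simpl; [lra|rewrite IHl; lra]. Qed.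

Lemma sumR_ext {A} (f g : A -> R) l :
  (forall x, In x l -> f x = g x) -> sumR (map f l) = sumR (map g l).
Proof. intros H; f_equal; apply map_ext_in; auto. Qed.

Lemma sumR_le {A} (f g : A -> R) l :
  (forall x, In x l -> f x <= g x) -> sumR (map f l) <= sumR (map g l).
Proof.
  induction l; simpl; intros H; [lra|].
  pose proof (H a (or_introl eq_refl)); pose proof (IHl (fun x Hx => H x (or_intror Hx))); lra.
Qed.

Lemma sumR_ge0 {A} (f : A -> R) l : (forall x, In x l -> 0 <= f x) -> 0 <= sumR (map f l).
Proof.
  intros H; replace 0 with (sumR (map (fun _ : A => 0) l)); [now apply sumR_le|].
  induction l; simpl; [easy|rewrite IHl; auto with datatypes; lra].
Qed.

Lemma sumR_eq0 {A} (f : A -> R) l : (forall x, In x l -> f x = 0) -> sumR (map f l) = 0.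
Proof.
  intros H; induction l; simpl; [easy|].
  rewrite H, IHl; auto with datatypes; lra.
Qed.

Lemma sumR_ge_term {A} (f : A -> R) l x :
  In x l -> (forall y, In y l -> 0 <= f y) -> f x <= sumR (map f l).
Proof.
  induction l; simpl; intros Hin H; [contradiction|].
  pose proof (H a (or_introl eq_refl)).
  pose proof (sumR_ge0 f l (fun y Hy => H y (or_intror Hy))).
  destruct Hin as [<-|Hin]; [lra|].
  pose proof (IHl Hin (fun y Hy => H y (or_intror Hy))); lra.
Qed.

Lemma sumR_neq0 {A} (f : A -> R) l : sumR (map f l) <> 0 -> exists x, In x l /\ f x <> 0.
Proof.
  intros H; apply NNPP; intros Hn; apply H, sumR_eq0.
  intros x Hx; apply NNPP; eauto.
Qed.

Lemma sumR_exchange {A B} (F : A -> B -> R) l1 l2 :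
  sumR (map (fun x => sumR (map (F x) l2)) l1) =
  sumR (map (fun y => sumR (map (fun x => F x y) l1)) l2).
Proof.
  induction l1; simpl.
  - symmetry; apply sumR_eq0; auto.
  - rewrite IHl1, <- sumR_add; reflexivity.
Qed.

Lemma sumR_flat_map {A B} (g : A -> list B) (f : B -> R) l :
  sumR (map f (flat_map g l)) = sumR (map (fun x => sumR (map f (g x))) l).
Proof. induction l; simpl; auto. rewrite map_app, sumR_app, IHl; auto. Qed.

Lemma sumR_filter {A} (p : A -> bool) (f : A -> R) l :
  sumR (map f l) = sumR (map f (filter p l)) + sumR (map f (filter (fun x => negb (p x)) l)).
Proof. induction l; simpl; [lra|]. destruct (p a); simpl; rewrite IHl; lra. Qed.

Lemma sumR_filter_eq {A} (p : A -> bool) (f : A -> R) l :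
  (forall x, In x l -> p x = false -> f x = 0) -> sumR (map f (filter p l)) = sumR (map f l).
Proof.
  intros H; rewrite (sumR_filter p f l), (sumR_eq0 f (filter (fun x => negb (p x)) l)); [lra|].
  intros x Hx; apply filter_In in Hx as [Hx Hp]; apply H; auto; now destruct (p x).
Qed.

Lemma sumR_single {A} (f : A -> R) l x :
  NoDup l -> In x l -> (forall y, In y l -> y <> x -> f y = 0) -> sumR (map f l) = f x.
Proof.
  induction 1 as [|a l Ha Hnd IH]; simpl; intros Hin Hz; [contradiction|].
  destruct Hin as [<-|Hin].
  - rewrite sumR_eq0; [lra|]. intros y Hy; apply Hz; auto; intros ->; contradiction.
  - rewrite Hz, IH; auto; [lra|]. intros ->; contradiction.
Qed.

Lemma map_nth_seq0 {A} (l : list A) x0 : map (fun k => nth k l x0) (seq 0 (length l)) = l.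
Proof. induction l; simpl; f_equal; auto. rewrite <- seq_shift, map_map; auto. Qed.

Definition classical_dec {A} (x y : A) : {x = y} + {x <> y} := excluded_middle_informative (x = y).

Lemma dirac_same M : dirac M M = 1.
Proof. unfold dirac; destruct excluded_middle_informative; congruence. Qed.

Lemma dirac_other M X : X <> M -> dirac M X = 0.
Proof. unfold dirac; destruct excluded_middle_informative; congruence. Qed.

Lemma dirac_bounds M X : 0 <= dirac M X <= 1.
Proof. unfold dirac; destruct excluded_middle_informative; lra. Qed.

Lemma dirac_sym M X : dirac M X = dirac X M.
Proof. unfold dirac; repeat destruct excluded_middle_informative; congruence. Qed.

Lemma dirac_neq0 M X : dirac M X <> 0 -> X = M.
Proof. intros H; apply NNPP; intros Hne; apply H, dirac_other, Hne. Qed.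

Lemma dirac_par X Y A B : dirac (NPar X Y) (NPar A B) = dirac X A * dirac Y B.
Proof. unfold dirac; repeat destruct excluded_middle_informative; congruence || lra. Qed.

Lemma sumR_dirac (c : network -> R) l X :
  NoDup l -> In X l -> sumR (map (fun Y => c Y * dirac Y X) l) = c X.
Proof.
  intros Hnd Hin; rewrite (sumR_single _ l X Hnd Hin), dirac_same; [lra|].
  intros Y _ Hne; rewrite dirac_other; [lra|auto].
Qed.

Definition mix (l : list (R * network)) : pdist :=
  fun Y => sumR (map (fun '(r, Z) => r * dirac Z Y) l).

Definition weight (l : list (R * network)) : R := sumR (map fst l).

Definition scale (c : R) (l : list (R * network)) := map (fun '(r, Z) => (c * r, Z)) l.

Definition nonneg_weights (l : list (R * network)) := Forall (fun '(r, _) => 0 <= r) l.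

Lemma mix_app l1 l2 Y : mix (l1 ++ l2) Y = mix l1 Y + mix l2 Y.
Proof. unfold mix; rewrite map_app, sumR_app; auto. Qed.

Lemma weight_app l1 l2 : weight (l1 ++ l2) = weight l1 + weight l2.
Proof. unfold weight; rewrite map_app, sumR_app; auto. Qed.

Lemma mix_scale c l Y : mix (scale c l) Y = c * mix l Y.
Proof. unfold mix, scale; rewrite map_map, <- sumR_scal; apply sumR_ext; intros [r Z] _; lra. Qed.

Lemma weight_scale c l : weight (scale c l) = c * weight l.
Proof. unfold weight, scale; rewrite map_map, <- sumR_scal; apply sumR_ext; intros [r Z] _; simpl; lra. Qed.

Lemma nonneg_weights_app l1 l2 :
  nonneg_weights l1 -> nonneg_weights l2 -> nonneg_weights (l1 ++ l2).
Proof. intros; apply Forall_app; auto. Qed.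

Lemma nonneg_weights_scale c l : 0 <= c -> nonneg_weights l -> nonneg_weights (scale c l).
Proof.
  intros Hc H; apply Forall_map, (Forall_impl _ (P := fun '(r, _) => 0 <= r)); auto.
  intros [r Z] Hr; apply Rmult_le_pos; auto.
Qed.

Lemma has_mass_ext D D' m : (forall Y, D Y = D' Y) -> has_mass D m -> has_mass D' m.
Proof.
  intros H [l [Hnd [Hs Hm]]]; exists l; repeat split; auto.
  - intros X HX; apply Hs; rewrite H; auto.
  - rewrite <- Hm; apply sumR_ext; intros; rewrite H; auto.
Qed.

Lemma has_mass_mix l : has_mass (mix l) (weight l).
Proof.
  set (s := nodup classical_dec (map snd l)).
  exists s; split; [apply NoDup_nodup|split].
  - intros X HX; apply sumR_neq0 in HX as [[r Z] [Hin HZ]].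
    assert (X = Z) as -> by (apply dirac_neq0; intros E; rewrite E in HZ; lra).
    apply nodup_In, in_map_iff; now exists (r, Z).
  - unfold mix, weight; rewrite <- sumR_exchange; apply sumR_ext; intros [r Z] Hin.
    rewrite sumR_scal, (sumR_ext _ (fun Y => 1 * dirac Y Z)) by (intros; rewrite dirac_sym; lra).
    rewrite (sumR_dirac (fun _ => 1)); [simpl; lra|apply NoDup_nodup|].
    apply nodup_In, in_map_iff; now exists (r, Z).
Qed.

(* The part of well-formedness that transitions preserve: every probabilistic
   choice has nonnegative weights summing to 1. *)
Fixpoint proc_prob (P : proc) : Prop :=
  match P with
  | PNil | PVar _ => True
  | PSnd _ C | PTau C | PSleep C => choice_prob C /\ csum C = 1
  | PRcv _ C D => choice_prob C /\ csum C = 1 /\ choice_prob D /\ csum D = 1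
  | PFix _ P' => proc_prob P'
  end
with choice_prob (C : pchoice) : Prop :=
  match C with
  | CLast p P' => 0 <= p /\ proc_prob P'
  | CCons p P' C' => 0 <= p /\ proc_prob P' /\ choice_prob C'
  end.

Fixpoint net_prob (M : network) : Prop :=
  match M with
  | NZero | NBot => True
  | NPar M1 M2 => net_prob M1 /\ net_prob M2
  | NNode _ P _ => proc_prob P
  end.

Scheme proc_mind := Induction for proc Sort Prop
  with pchoice_mind := Induction for pchoice Sort Prop.
Combined Scheme proc_pchoice_mind from proc_mind, pchoice_mind.

Lemma csum_subst_vc v x C : csum (subst_vc v x C) = csum C.
Proof. induction C; simpl; congruence. Qed.

Lemma csum_subst_Xc Q X C : csum (subst_Xc Q X C) = csum C.
Proof. induction C; simpl; congruence. Qed.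

Lemma proc_prob_subst_v v x :
  (forall P, proc_prob P -> proc_prob (subst_v v x P)) /\
  (forall C, choice_prob C -> choice_prob (subst_vc v x C)).
Proof.
  apply proc_pchoice_mind; simpl; intros;
    try destruct (Nat.eqb _ _); rewrite ?csum_subst_vc; tauto.
Qed.

Lemma proc_prob_subst_X Q X : proc_prob Q ->
  (forall P, proc_prob P -> proc_prob (subst_X Q X P)) /\
  (forall C, choice_prob C -> choice_prob (subst_Xc Q X C)).
Proof.
  intros HQ; apply proc_pchoice_mind; simpl; intros;
    try destruct (Nat.eqb _ _); simpl; rewrite ?csum_subst_Xc; tauto.
Qed.

Lemma proc_wf_prob :
  (forall P xs Xs, proc_wf xs Xs P -> proc_prob P) /\
  (forall C xs Xs, choice_wf xs Xs C -> choice_prob C).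
Proof.
  apply proc_pchoice_mind; simpl; intros;
  repeat match goal with H : _ /\ _ |- _ => destruct H end; repeat split; eauto; lra.
Qed.

Lemma net_ok_prob M : net_ok M -> net_prob M.
Proof. induction M; simpl; intuition. eapply (proj1 proc_wf_prob); eauto. Qed.

Definition prob_mix (D : pdist) (w : R) : Prop :=
  exists l, (forall Y, D Y = mix l Y) /\
    Forall (fun '(r, Z) => 0 <= r /\ net_prob Z) l /\ weight l = w.

Lemma prob_mix_nonneg D w :
  prob_mix D w -> exists l, (forall Y, D Y = mix l Y) /\ nonneg_weights l /\ weight l = w.
Proof.
  intros [l [e [f h]]]; exists l; repeat split; auto.
  eapply Forall_impl; [|exact f]; intros [r Z]; tauto.
Qed.

Lemma prob_mix_support D w Y : prob_mix D w -> D Y <> 0 -> net_prob Y.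
Proof.
  intros [l [e [f _]]] H; rewrite e in H; apply sumR_neq0 in H as [[r Z] [Hin Hz]].
  assert (Y = Z) as -> by (apply dirac_neq0; intros E; rewrite E in Hz; lra).
  rewrite Forall_forall in f; apply (f _ Hin).
Qed.

Lemma prob_mix_dirac M : net_prob M -> prob_mix (dirac M) 1.
Proof.
  intros H; exists [(1, M)]; repeat split.
  - intros Y; unfold mix; simpl; lra.
  - constructor; [simpl; split; [lra|auto]|constructor].
  - unfold weight; simpl; lra.
Qed.

Fixpoint choice_mix n nu (C : pchoice) : list (R * network) :=
  match C with
  | CLast p P => [(p, NNode n P nu)]
  | CCons p P C' => (p, NNode n P nu) :: choice_mix n nu C'
  end.

Lemma prob_mix_sem n nu C : choice_prob C -> prob_mix (sem n nu C) (csum C).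
Proof.
  intros H; exists (choice_mix n nu C); induction C as [p P|p P C IH] using pchoice_ind;
    unfold mix, weight in *; simpl in *.
  - repeat split; [intros; lra|constructor; [simpl; tauto|constructor]|lra].
  - destruct H as [Hp [HP HC]]; destruct (IH HC) as [e [f w]].
    repeat split; [intros Y; rewrite e; lra|constructor; auto|rewrite w; lra].
Qed.

Definition par_mix (l1 l2 : list (R * network)) :=
  flat_map (fun '(r, X) => map (fun '(s, Y) => (r * s, NPar X Y)) l2) l1.

Lemma dpar_mix l1 l2 Z : dpar (mix l1) (mix l2) Z = mix (par_mix l1 l2) Z.
Proof.
  unfold mix, par_mix; rewrite sumR_flat_map.
  destruct Z as [|A B| |]; simpl;
    try (symmetry; apply sumR_eq0; intros [r X] _; rewrite map_map; apply sumR_eq0;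
         intros [s Y] _; rewrite dirac_other; [lra|congruence]).
  rewrite Rmult_comm, <- sumR_scal; apply sumR_ext; intros [r X] _; rewrite map_map.
  rewrite Rmult_comm, <- sumR_scal; apply sumR_ext; intros [s Y] _.
  rewrite dirac_par; lra.
Qed.

Lemma weight_par_mix l1 l2 : weight (par_mix l1 l2) = weight l1 * weight l2.
Proof.
  unfold weight, par_mix; rewrite sumR_flat_map, Rmult_comm, <- sumR_scal.
  apply sumR_ext; intros [r X] _; rewrite map_map, Rmult_comm, <- sumR_scal.
  apply sumR_ext; intros [s Y] _; simpl; lra.
Qed.

Lemma prob_mix_dpar D T : prob_mix D 1 -> prob_mix T 1 -> prob_mix (dpar D T) 1.
Proof.
  intros [l1 [e1 [f1 w1]]] [l2 [e2 [f2 w2]]]; exists (par_mix l1 l2); repeat split.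
  - intros [| A B | |]; rewrite <- dpar_mix; simpl; rewrite ?e1, ?e2; auto.
  - rewrite Forall_forall in *; intros [r Z] Hin.
    apply in_flat_map in Hin as [[r1 X] [Hx Hin]]; apply in_map_iff in Hin as [[r2 Y] [E Hy]].
    injection E as <- <-; specialize (f1 _ Hx); specialize (f2 _ Hy); simpl in *.
    split; [apply Rmult_le_pos|]; tauto.
  - rewrite weight_par_mix, w1, w2; lra.
Qed.

Lemma step_prob_mix M a D : step M a D -> net_prob M -> prob_mix D 1.
Proof.
  induction 1; simpl; intros HM;
    try solve [apply prob_mix_dirac; simpl; auto
              | apply prob_mix_dpar; auto; try apply prob_mix_dirac; tauto
              | auto].
  - destruct HM as [HC <-]; apply prob_mix_sem; auto.
  - destruct HM as [HC [<- _]]; rewrite <- (csum_subst_vc v x).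
    apply prob_mix_sem, (proc_prob_subst_v v x); auto.
  - destruct HM as [HC <-]; apply prob_mix_sem; auto.
  - destruct HM as [_ [_ [HD <-]]]; apply prob_mix_sem; auto.
  - destruct HM as [HC <-]; apply prob_mix_sem; auto.
  - apply IHstep, (proc_prob_subst_X (PFix X P) X); auto.
Qed.

Lemma hstep_prob_mix a M D : hstep a M D -> net_prob M -> prob_mix D 1.
Proof.
  intros H HM; destruct a; simpl in H; try exact (step_prob_mix _ _ _ H HM).
  destruct H as [H| ->]; [exact (step_prob_mix _ _ _ H HM)|apply prob_mix_dirac; auto].
Qed.

(** * Optimal matchings *)

Lemma matching_support w D T r M N :
  matching w D T -> In (r, M, N) w -> r <> 0 -> D M <> 0 /\ T N <> 0.
Proof.
  intros [Hnn [HD HT]] Hin Hr; rewrite Forall_forall in Hnn.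
  assert (Hw : forall g : network -> network -> network, forall Y,
            r * dirac (g M N) Y <= sumR (map (fun '(r, M, N) => r * dirac (g M N) Y) w)).
  { intros g Y; apply (sumR_ge_term (fun '(r, M, N) => r * dirac (g M N) Y) w (r, M, N) Hin).
    intros [[r' M'] N'] Hy; apply Rmult_le_pos; [apply (Hnn _ Hy)|apply dirac_bounds]. }
  pose proof (Hnn _ Hin) as Hr0; simpl in Hr0.
  split; [rewrite HD; pose proof (Hw (fun M _ => M) M)|rewrite HT; pose proof (Hw (fun _ N => N) N)];
    simpl in *; rewrite dirac_same in *; lra.
Qed.

Section OptimalMatching.

Variable d : network -> network -> R.
Variables D T : pdist.
Variable w0 : list (R * network * network).
Hypothesis w0_matching : matching w0 D T.

(* Every matching lives on the finitely many pairs of support points of [w0];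
   a matching is then a point of a bounded polytope in [R^K]. *)
Let pairs := nodup classical_dec
  (list_prod (map (fun '(_, M, _) => M) w0) (map (fun '(_, _, N) => N) w0)).
Let K := length pairs.
Let pair_at k := nth k pairs (NZero, NZero).

Lemma matching_pairs w r M N : matching w D T -> In (r, M, N) w -> r <> 0 -> In (M, N) pairs.
Proof.
  intros Hw Hin Hr; destruct (matching_support w D T r M N Hw Hin Hr) as [HM HN].
  destruct w0_matching as [_ [HD HT]]; rewrite HD in HM; rewrite HT in HN.
  apply sumR_neq0 in HM as [[[r1 M1] N1] [Hin1 H1]], HN as [[[r2 M2] N2] [Hin2 H2]].
  assert (M = M1) as -> by (apply dirac_neq0; intros E; rewrite E in H1; lra).
  assert (N = N2) as -> by (apply dirac_neq0; intros E; rewrite E in H2; lra).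
  apply nodup_In, in_prod; apply in_map_iff; [exists (r1, M1, N1)|exists (r2, M2, N2)]; auto.
Qed.

Definition pair_mass w k : R :=
  sumR (map (fun '(r, M, N) => r * (dirac M (fst (pair_at k)) * dirac N (snd (pair_at k)))) w).

Lemma sumR_pair_mass w (h : network * network -> R) : matching w D T ->
  sumR (map (fun k => pair_mass w k * h (pair_at k)) (seq 0 K)) =
  sumR (map (fun '(r, M, N) => r * h (M, N)) w).
Proof.
  intros Hw; unfold pair_mass.
  rewrite (sumR_ext _ (fun k => sumR (map (fun '(r, M, N) =>
             r * (dirac M (fst (pair_at k)) * dirac N (snd (pair_at k))) * h (pair_at k)) w))).
  2:{ intros k _; rewrite Rmult_comm, <- sumR_scal; apply sumR_ext; intros [[? ?] ?] _; lra. }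
  rewrite sumR_exchange; apply sumR_ext; intros [[r M] N] Hin.
  transitivity (sumR (map (fun p => r * (dirac M (fst p) * dirac N (snd p)) * h p) pairs)).
  { unfold K, pair_at; rewrite <- (map_nth_seq0 pairs (NZero, NZero)) at 2; rewrite map_map; auto. }
  destruct (Req_dec r 0) as [->|Hr]; [rewrite sumR_eq0; intros; lra|].
  rewrite (sumR_single _ pairs (M, N)); simpl; [rewrite !dirac_same; lra|apply NoDup_nodup|eauto using matching_pairs|].
  intros [M' N'] _ Hne; simpl; destruct (classic (M' = M)) as [->|HM].
  - rewrite (dirac_other N N'); [lra|congruence].
  - rewrite (dirac_other M M'); [lra|auto].
Qed.

Let marg_coef (i : network + network) k : R :=
  match i with inl X => dirac (fst (pair_at k)) X | inr Y => dirac (snd (pair_at k)) Y end.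
Let marg_val (i : network + network) : R := match i with inl X => D X | inr Y => T Y end.
Let mass_bound k := D (fst (pair_at k)).
Let cost k := d (fst (pair_at k)) (snd (pair_at k)).

Lemma pair_mass_in_polytope w : matching w D T ->
  in_polytope K mass_bound (network + network) marg_coef marg_val (pair_mass w).
Proof.
  intros Hw.
  assert (Hmarg : forall i, lin K (marg_coef i) (pair_mass w) = marg_val i).
  { pose proof Hw as [_ [HD HT]]; intros [X|Y]; unfold lin; simpl;
      [rewrite (sumR_pair_mass w (fun p => dirac (fst p) X)), HD
      |rewrite (sumR_pair_mass w (fun p => dirac (snd p) Y)), HT]; auto;
      apply sumR_ext; intros [[r M] N] _; reflexivity. }
  assert (Hnn : forall k, 0 <= pair_mass w k).
  { intros k; apply sumR_ge0; intros [[r M] N] Hin; destruct Hw as [Hnn _].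
    rewrite Forall_forall in Hnn; pose proof (Hnn _ Hin); simpl in *.
    pose proof (dirac_bounds M (fst (pair_at k))); pose proof (dirac_bounds N (snd (pair_at k))).
    apply Rmult_le_pos, Rmult_le_pos; tauto. }
  split; auto; intros k Hk; split; auto; unfold mass_bound.
  pose proof (Hmarg (inl (fst (pair_at k)))) as Hk'; unfold lin in Hk'; simpl in Hk'; rewrite <- Hk'.
  replace (pair_mass w k) with (pair_mass w k * dirac (fst (pair_at k)) (fst (pair_at k)))
    by (rewrite dirac_same; lra).
  apply (sumR_ge_term (fun k0 => pair_mass w k0 * dirac (fst (pair_at k0)) (fst (pair_at k))));
    [apply in_seq; lia|intros; apply Rmult_le_pos; auto; apply dirac_bounds].
Qed.

Lemma mcost_pair_mass w : matching w D T -> mcost d w = lin K cost (pair_mass w).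
Proof. intros Hw; unfold lin, cost; rewrite (sumR_pair_mass w (fun p => d (fst p) (snd p))); auto. Qed.

Lemma kant_exists : exists k, is_kant d D T k.
Proof.
  destruct (LinearProgram.lin_attains_min K mass_bound (network + network) marg_coef marg_val cost)
    as [v [[Hbox Hmarg] Hmin]]; [eauto using pair_mass_in_polytope|].
  set (wv := map (fun k => (v k, fst (pair_at k), snd (pair_at k))) (seq 0 K)).
  assert (Hwv : matching wv D T).
  { split; [|split].
    - apply Forall_map, Forall_forall; intros k Hk; apply in_seq in Hk; apply Hbox; lia.
    - intros X; rewrite <- (Hmarg (inl X) : lin K _ v = D X); unfold wv, lin; rewrite map_map; auto.
    - intros Y; rewrite <- (Hmarg (inr Y) : lin K _ v = T Y); unfold wv, lin; rewrite map_map; auto. }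
  exists (mcost d wv); split; [now exists wv|].
  intros w Hw; rewrite (mcost_pair_mass w Hw).
  replace (mcost d wv) with (lin K cost v) by (unfold mcost, wv, lin; rewrite map_map; auto).
  apply Hmin, pair_mass_in_polytope, Hw.
Qed.

End OptimalMatching.

Lemma kant_le_of_matching d D T w r : matching w D T -> mcost d w <= r -> kant_le d D T r.
Proof.
  intros Hw Hc; destruct (kant_exists d D T w Hw) as [k [Hk Hmin]].
  exists k; split; [split; auto|specialize (Hmin w Hw); lra].
Qed.

(** * Weak transitions *)

Lemma lift_support a D D' : lift a D D' ->
  (forall Z, D Z <> 0 -> net_prob Z) -> forall Z, D' Z <> 0 -> net_prob Z.
Proof.
  intros [lJ [lN [_ [FJ [FN [HD HD']]]]]] Hsupp Z HZ.
  rewrite HD' in HZ; apply sumR_neq0 in HZ as [[[p Mi] Ti] [Hin Hz]].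
  rewrite Forall_forall in FJ, FN; destruct (FJ _ Hin) as [Hp Hh].
  assert (HMi : D Mi <> 0).
  { rewrite HD; apply Rgt_not_eq.
    assert (p * dirac Mi Mi <= sumR (map (fun '(p, M, _) => p * dirac M Mi) lJ)).
    { apply (sumR_ge_term (fun '(p, M, _) => p * dirac M Mi) lJ (p, Mi, Ti) Hin).
      intros [[p' M'] T'] Hy; destruct (FJ _ Hy); apply Rmult_le_pos; [lra|apply dirac_bounds]. }
    assert (0 <= sumR (map (fun '(p, M) => p * dirac M Mi) lN)).
    { apply sumR_ge0; intros [p' M'] Hy; destruct (FN _ Hy); apply Rmult_le_pos; [lra|apply dirac_bounds]. }
    rewrite dirac_same in *; lra. }
  apply (prob_mix_support Ti 1 Z); [apply (hstep_prob_mix a Mi); auto|].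
  intros E; rewrite E in Hz; lra.
Qed.

Lemma wtau_support D D' : wtau D D' ->
  (forall Z, D Z <> 0 -> net_prob Z) -> forall Z, D' Z <> 0 -> net_prob Z.
Proof. induction 1; eauto using lift_support. Qed.

Lemma wtau_snoc D D' D'' : wtau D D' -> lift LTau D' D'' -> wtau D D''.
Proof. induction 1; intros Hl; eapply WT_step; eauto using WT_refl. Qed.

Lemma lift_dirac a X D : hstep a X D -> lift a (dirac X) D.
Proof.
  intros H; exists [(1, X, D)], []; repeat split.
  - discriminate.
  - constructor; [split; [lra|auto]|constructor].
  - constructor.
  - intros Y; simpl; lra.
  - intros Y; simpl; lra.
Qed.

Lemma wstep_of_wtau_lift a M D T :
  is_action a -> wtau (dirac M) D -> lift a D T -> wstep a M T.
Proof.
  destruct a; simpl; intros Ha Hw Hl; try contradiction;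
    eauto using wtau_snoc, WT_refl.
Qed.

Lemma step_hstep a X D : is_action a -> step X a D -> hstep a X D.
Proof. destruct a; simpl; tauto. Qed.

(** * Couplings of finite mixtures *)

Definition marg1 (w : list (R * network * network)) : pdist :=
  fun X => sumR (map (fun '(r, M, _) => r * dirac M X) w).
Definition marg2 (w : list (R * network * network)) : pdist :=
  fun Y => sumR (map (fun '(r, _, N) => r * dirac N Y) w).

Definition diag_coupling (c : R) (l : list (R * network)) : list (R * network * network) :=
  map (fun '(r, X) => (c * r, X, X)) l.
Definition prod_coupling (l1 l2 : list (R * network)) : list (R * network * network) :=
  flat_map (fun '(r, X) => map (fun '(s, Y) => (r * s, X, Y)) l2) l1.

Lemma marg1_app w1 w2 X : marg1 (w1 ++ w2) X = marg1 w1 X + marg1 w2 X.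
Proof. unfold marg1; rewrite map_app, sumR_app; auto. Qed.
Lemma marg2_app w1 w2 Y : marg2 (w1 ++ w2) Y = marg2 w1 Y + marg2 w2 Y.
Proof. unfold marg2; rewrite map_app, sumR_app; auto. Qed.
Lemma mcost_app d w1 w2 : mcost d (w1 ++ w2) = mcost d w1 + mcost d w2.
Proof. unfold mcost; rewrite map_app, sumR_app; auto. Qed.

Lemma marg1_diag c l X : marg1 (diag_coupling c l) X = c * mix l X.
Proof. unfold marg1, diag_coupling, mix; rewrite map_map, <- sumR_scal; apply sumR_ext; intros [r Z] _; lra. Qed.
Lemma marg2_diag c l Y : marg2 (diag_coupling c l) Y = c * mix l Y.
Proof. unfold marg2, diag_coupling, mix; rewrite map_map, <- sumR_scal; apply sumR_ext; intros [r Z] _; lra. Qed.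
Lemma mcost_diag d c l : (forall Z, d Z Z = 0) -> mcost d (diag_coupling c l) = 0.
Proof. intros H; unfold mcost, diag_coupling; rewrite map_map; apply sumR_eq0; intros [r Z] _; rewrite H; lra. Qed.

Lemma marg1_prod l1 l2 X : marg1 (prod_coupling l1 l2) X = mix l1 X * weight l2.
Proof.
  unfold marg1, prod_coupling, mix, weight; rewrite sumR_flat_map, Rmult_comm, <- sumR_scal.
  apply sumR_ext; intros [r Z] _; rewrite map_map, Rmult_comm, <- sumR_scal.
  apply sumR_ext; intros [s Y] _; simpl; lra.
Qed.
Lemma marg2_prod l1 l2 Y : marg2 (prod_coupling l1 l2) Y = weight l1 * mix l2 Y.
Proof.
  unfold marg2, prod_coupling, mix, weight; rewrite sumR_flat_map, Rmult_comm, <- sumR_scal.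
  apply sumR_ext; intros [r Z] _; rewrite map_map, Rmult_comm, <- sumR_scal.
  apply sumR_ext; intros [s X] _; simpl; lra.
Qed.
Lemma mcost_prod_le d l1 l2 : (forall X Y, d X Y <= 1) ->
  nonneg_weights l1 -> nonneg_weights l2 -> mcost d (prod_coupling l1 l2) <= weight l1 * weight l2.
Proof.
  intros Hd H1 H2; unfold mcost, prod_coupling, weight; rewrite sumR_flat_map, Rmult_comm, <- sumR_scal.
  apply sumR_le; intros [r Z] Hz; rewrite map_map, Rmult_comm, <- sumR_scal.
  apply sumR_le; intros [s Y] Hy; unfold nonneg_weights in *; rewrite Forall_forall in H1, H2.
  specialize (H1 _ Hz); specialize (H2 _ Hy); specialize (Hd Z Y); simpl in *.
  assert (0 <= r * s) by (apply Rmult_le_pos; auto); nra.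
Qed.

Lemma nonneg_diag c l : 0 <= c -> nonneg_weights l ->
  Forall (fun '(r, _, _) => 0 <= r) (diag_coupling c l).
Proof.
  intros Hc H; apply Forall_map, (Forall_impl _ (P := fun '(r, _) => 0 <= r)); auto.
  intros [r Z] Hr; apply Rmult_le_pos; auto.
Qed.
Lemma nonneg_prod l1 l2 : nonneg_weights l1 -> nonneg_weights l2 ->
  Forall (fun '(r, _, _) => 0 <= r) (prod_coupling l1 l2).
Proof.
  intros H1 H2; unfold nonneg_weights in *; rewrite Forall_forall in *; intros [[r X] Y] Hin.
  apply in_flat_map in Hin as [[r1 X'] [Hx Hin]]; apply in_map_iff in Hin as [[r2 Y'] [E Hy]].
  injection E as <- <- <-; apply Rmult_le_pos; [apply (H1 _ Hx)|apply (H2 _ Hy)].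
Qed.

(* Keep the fraction [1 - q] of [D] in place and transport the rest
   arbitrarily onto a mass [q]: each unit moved costs at most 1. *)
Lemma kant_le_mix d D T l lb q :
  (forall X Y, 0 <= d X Y <= 1) -> (forall Z, d Z Z = 0) -> q <= 1 ->
  nonneg_weights l -> weight l = 1 -> nonneg_weights lb -> weight lb = q ->
  (forall Y, D Y = mix l Y) -> (forall Y, T Y = (1 - q) * mix l Y + mix lb Y) ->
  kant_le d D T q.
Proof.
  intros Hd Hdd Hq Hl Hwl Hlb Hwlb HD HT.
  apply (kant_le_of_matching d D T (diag_coupling (1 - q) l ++ prod_coupling l lb)).
  - split; [apply Forall_app; split; [apply nonneg_diag; auto; lra|apply nonneg_prod; auto]|split].
    + intros X; fold (marg1 (diag_coupling (1 - q) l ++ prod_coupling l lb) X).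
      rewrite marg1_app, marg1_diag, marg1_prod, HD, Hwlb; lra.
    + intros Y; fold (marg2 (diag_coupling (1 - q) l ++ prod_coupling l lb) Y).
      rewrite marg2_app, marg2_diag, marg2_prod, HT, Hwl; lra.
  - rewrite mcost_app, mcost_diag; auto.
    pose proof (mcost_prod_le d l lb (fun X Y => proj2 (Hd X Y)) Hl Hlb); rewrite Hwl, Hwlb in *; lra.
Qed.

Lemma prob_mix_sum (s : list network) (c : network -> R) (F : network -> pdist) :
  (forall Z, In Z s -> 0 <= c Z /\ prob_mix (F Z) 1) ->
  exists L, (forall Y, sumR (map (fun Z => c Z * F Z Y) s) = mix L Y) /\
    nonneg_weights L /\ weight L = sumR (map c s).
Proof.
  induction s as [|Z s IH]; intros H.
  - exists []; repeat split; simpl; auto; constructor.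
  - destruct IH as [L [HL [HnL HwL]]]; [intros; apply H; simpl; auto|].
    destruct (H Z (or_introl eq_refl)) as [Hc HZ]; apply prob_mix_nonneg in HZ as [lZ [eZ [nZ wZ]]].
    exists (scale (c Z) lZ ++ L); repeat split.
    + intros Y; simpl; rewrite mix_app, mix_scale, <- eZ, HL; auto.
    + apply nonneg_weights_app; [apply nonneg_weights_scale|]; auto.
    + rewrite weight_app, weight_scale, wZ, HwL; simpl; lra.
Qed.

(** * The two kinds of simulation steps *)

Lemma self_simulation d X a D :
  (forall X Y, 0 <= d X Y <= 1) -> (forall Z, d Z Z = 0) ->
  net_prob X -> is_action a -> step X a D ->
  exists T m, wstep a X T /\ has_mass T m /\
    kant_le d D (fun Y => T Y + (1 - m) * dirac NBot Y) 0.
Proof.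
  intros Hd Hdd HX Ha Hs.
  destruct (prob_mix_nonneg _ _ (step_prob_mix _ _ _ Hs HX)) as [l [HD [Hl Hw]]].
  exists D, 1; split; [|split].
  - apply (wstep_of_wtau_lift a X (dirac X)); auto using WT_refl, lift_dirac, step_hstep.
  - rewrite <- Hw; apply (has_mass_ext (mix l)); auto using has_mass_mix.
  - apply (kant_le_mix d D _ l [] 0); auto; try lra; try constructor.
    intros Y; rewrite HD; unfold mix; simpl; lra.
Qed.

Definition positive_part (c : R) (Delta : pdist) (l : list network) :=
  filter (fun Z => if Rlt_dec 0 (c * Delta Z) then true else false) l.

Lemma dist_scaled_support Delta c : is_dist Delta -> 0 <= c <= 1 ->
  exists s, (forall Z, In Z s -> 0 < c * Delta Z <= 1) /\
    (forall X, c * Delta X = sumR (map (fun Z => c * Delta Z * dirac Z X) s)) /\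
    sumR (map (fun Z => c * Delta Z) s) = c.
Proof.
  intros [Hnn [l [Hnd [Hsupp Hsum]]]] Hc; exists (positive_part c Delta l).
  assert (Hpos : forall Z, In Z l -> (if Rlt_dec 0 (c * Delta Z) then true else false) = false ->
                   c * Delta Z = 0).
  { intros Z _; destruct Rlt_dec as [|Hn]; [discriminate|intros _].
    pose proof (Rmult_le_pos _ _ (proj1 Hc) (Hnn Z)); lra. }
  split; [|split].
  - intros Z HZ; apply filter_In in HZ as [HZ Hp]; destruct Rlt_dec; [|discriminate].
    pose proof (sumR_ge_term Delta l Z HZ (fun Y _ => Hnn Y)); pose proof (Hnn Z); nra.
  - intros X; unfold positive_part; rewrite sumR_filter_eq.
    2:{ intros Z HZ Hp; rewrite (Hpos Z HZ Hp); lra. }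
    destruct (classic (In X l)) as [HX|HX]; [rewrite (sumR_dirac (fun Z => c * Delta Z)); auto|].
    rewrite sumR_eq0; [|intros Z HZ; rewrite dirac_other; [lra|intros ->; contradiction]].
    destruct (Req_dec (Delta X) 0) as [->|HD]; [lra|contradiction (HX (Hsupp X HD))].
  - unfold positive_part; rewrite sumR_filter_eq, sumR_scal, Hsum; [lra|auto].
Qed.

Definition movable (a : label) (Z : network) : bool :=
  if excluded_middle_informative (exists T, hstep a Z T) then true else false.

Definition pick (a : label) (Z : network) : pdist :=
  epsilon (inhabits (fun _ => 0)) (hstep a Z).

Lemma pick_hstep a Z : movable a Z = true -> hstep a Z (pick a Z).
Proof.
  unfold movable; destruct excluded_middle_informative as [H|]; [intros _|discriminate].
  apply (epsilon_spec _ _ H).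
Qed.

Lemma not_movable a Z T : movable a Z = false -> ~ hstep a Z T.
Proof. unfold movable; destruct excluded_middle_informative as [|H]; [discriminate|eauto]. Qed.

Lemma lift_mixture a Gam N Th p s c :
  0 < p <= 1 -> hstep a N Th -> (forall Z, In Z s -> 0 < c Z <= 1) ->
  (forall X, Gam X = p * dirac N X + sumR (map (fun Z => c Z * dirac Z X) s)) ->
  lift a Gam (fun Y => p * Th Y + sumR (map (fun Z => c Z * pick a Z Y) (filter (movable a) s))).
Proof.
  intros Hp HN Hc HGam.
  exists ((p, N, Th) :: map (fun Z => (c Z, Z, pick a Z)) (filter (movable a) s)),
         (map (fun Z => (c Z, Z)) (filter (fun Z => negb (movable a Z)) s)).
  repeat split.
  - discriminate.
  - constructor; [auto|]; apply Forall_map, Forall_forall; intros Z HZ.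
    apply filter_In in HZ as [HZ Hm]; auto using pick_hstep.
  - apply Forall_map, Forall_forall; intros Z HZ; apply filter_In in HZ as [HZ Hm].
    split; [auto|intros T; apply not_movable; now destruct (movable a Z)].
  - intros X; rewrite HGam, (sumR_filter (movable a)); simpl; rewrite !map_map; lra.
  - intros Y; simpl; rewrite map_map; lra.
Qed.

Lemma simulation_through_wtau d M N q Delta a Th :
  (forall X Y, 0 <= d X Y <= 1) -> (forall Z, d Z Z = 0) ->
  net_prob M -> 0 <= q < 1 -> is_dist Delta ->
  wtau (dirac M) (fun X => (1 - q) * dirac N X + q * Delta X) ->
  net_prob N -> is_action a -> step N a Th ->
  exists T m, wstep a M T /\ has_mass T m /\
    kant_le d Th (fun Y => T Y + (1 - m) * dirac NBot Y) q.
Proof.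
  intros Hd Hdd HM Hq HDelta Hwt HN Ha Hs.
  destruct (dist_scaled_support Delta q HDelta) as [s [Hs1 [Hdec Hsum]]]; [lra|].
  set (mov := filter (movable a) s).
  set (T' := fun Y => (1 - q) * Th Y + sumR (map (fun Z => q * Delta Z * pick a Z Y) mov)).
  assert (Hlift : lift a (fun X => (1 - q) * dirac N X + q * Delta X) T').
  { apply (lift_mixture a _ N Th); auto using step_hstep; [lra|]. intros X; rewrite Hdec; auto. }
  assert (Hpick : forall Z, In Z mov -> 0 <= q * Delta Z /\ prob_mix (pick a Z) 1).
  { intros Z HZ; apply filter_In in HZ as [HZ Hm]; destruct (Hs1 Z HZ).
    split; [lra|]; apply (hstep_prob_mix a Z); [now apply pick_hstep|].
    apply (wtau_support _ _ Hwt); [intros Z' HZ'; rewrite (dirac_neq0 _ _ HZ'); auto|].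
    pose proof (dirac_bounds N Z); nra. }
  destruct (prob_mix_nonneg _ _ (step_prob_mix _ _ _ Hs HN)) as [lt [Hlt [Hnlt Hwlt]]].
  destruct (prob_mix_sum mov (fun Z => q * Delta Z) (pick a) Hpick) as [L [HL [HnL HwL]]].
  assert (HwLq : weight L <= q).
  { rewrite HwL; apply Rle_trans with (sumR (map (fun Z => q * Delta Z) s)); [|lra].
    unfold mov; rewrite (sumR_filter (movable a) _ s).
    enough (0 <= sumR (map (fun Z => q * Delta Z) (filter (fun Z => negb (movable a Z)) s))) by lra.
    apply sumR_ge0; intros Z HZ; apply filter_In in HZ as [HZ _]; destruct (Hs1 Z HZ); lra. }
  set (m := (1 - q) + weight L).
  assert (HT' : forall Y, T' Y = mix (scale (1 - q) lt ++ L) Y).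
  { intros Y; unfold T'; rewrite mix_app, mix_scale, <- Hlt, <- HL; auto. }
  exists T', m; split; [|split].
  - eapply wstep_of_wtau_lift; eauto.
  - apply (has_mass_ext (mix (scale (1 - q) lt ++ L))); [intros; auto|].
    replace m with (weight (scale (1 - q) lt ++ L)); [apply has_mass_mix|].
    rewrite weight_app, weight_scale, Hwlt; unfold m; lra.
  - apply (kant_le_mix d Th _ lt (L ++ [(1 - m, NBot)]) q); auto; try lra.
    + apply nonneg_weights_app; auto; constructor; [simpl; unfold m; lra|constructor].
    + rewrite weight_app; unfold weight at 2; simpl; unfold m; lra.
    + intros Y; rewrite HT', !mix_app, mix_scale, <- Hlt; unfold mix at 3; simpl; lra.
Qed.

(** * The quasimetric witnessing [N <=_q M] *)

Definition dist_pair (N M : network) (q : R) (X Y : network) : R :=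
  if excluded_middle_informative (X = Y) then 0
  else if excluded_middle_informative (X = N /\ Y = M) then q else 1.

Lemma dist_pair_pseudoquasimetric N M q : 0 <= q <= 1 -> pseudoquasimetric (dist_pair N M q).
Proof.
  intros Hq; unfold dist_pair; split; [|split]; intros;
    repeat destruct excluded_middle_informative;
    repeat match goal with H : _ /\ _ |- _ => destruct H end; subst; try lra; try congruence;
    exfalso; intuition.
Qed.

Lemma dist_pair_weak_sim N M q Delta :
  net_ok M -> net_ok N -> 0 <= q <= 1 -> is_dist Delta ->
  wtau (dirac M) (fun X => (1 - q) * dirac N X + q * Delta X) ->
  weak_sim_qm (dist_pair N M q).
Proof.
  intros HM HN Hq HDelta Hwt; split; [now apply dist_pair_pseudoquasimetric|].
  assert (Hd : forall X Y, 0 <= dist_pair N M q X Y <= 1)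
    by (intros; unfold dist_pair; repeat destruct excluded_middle_informative; lra).
  assert (Hdd : forall Z, dist_pair N M q Z Z = 0)
    by (intros; unfold dist_pair; destruct excluded_middle_informative; congruence).
  intros X Y HX HY Hlt a D Ha Hs; unfold dist_pair in *.
  destruct excluded_middle_informative as [<-|Hne]; [now apply self_simulation; auto using net_ok_prob|].
  destruct excluded_middle_informative as [[-> ->]|]; [|lra].
  apply (simulation_through_wtau _ M N q Delta); auto using net_ok_prob; lra.
Qed.

Theorem proposition2p11 :
  forall (mm : network -> network -> R), least_wsqm mm ->
  forall (M N : network) (q : R) (Delta : pdist),
    net_ok M -> net_ok N -> 0 <= q <= 1 -> is_dist Delta ->
    wtau (dirac M) (fun X => (1 - q) * dirac N X + q * Delta X) ->
    qsim mm q N M.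
Proof.
  intros mm [_ Hleast] M N q Delta HM HN Hq HDelta Hwt; unfold qsim.
  apply Rle_trans with (dist_pair N M q N M).
  - apply Hleast; auto; now apply (dist_pair_weak_sim N M q Delta).
  - unfold dist_pair; repeat destruct excluded_middle_informative; try lra; intuition.
Qed.
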